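(* Let $Z$ be a decision structure. Every quotient graph in the module decomposition of $Z$ is either prime or a directed path with at least three nodes all of whose arcs carry the same label.
   Context: A decision structure is a finite directed acyclic graph $Z=(N,A)$, $A\subseteq N\times N$, with a unique source, together with an arc labelling $\ell:A\to\mathcal{R}$ (into a set $\mathcal{R}$ of return values) and a node labelling by actions, such that distinct arcs leaving the same node have distinct labels; the arc out of $v$ labelled $r$, if it exists, is the $r$-arc out of $v$. For $X\subseteq N$, $Z[X]$ is the induced subgraph with inherited labels. A subset $X\subseteq N(Z)$ is a module of $Z$ if $Z[X]$ has a unique source and for every node $v\notin X$: (i) every arc from $v$ to a node of $X$ ends at the source of $Z[X]$; (ii) if for some $x\in X$ there is an arc from $x$ to $v$ labelled $r$, then every $x'\in X$ has an $r$-arc, and it ends either at $v$ or in $X$. Modules $N(Z)$ and $\{v\}$ are trivial; $Z$ is prime if all its modules are trivial. A module is maximal if it is a proper subset of $N(Z)$ contained in no module other than itself and $N(Z)$. A modular partition is a partition of $N(Z)$ into modules; it is maximal if all blocks are maximal modules. For a partition $P$ of $N(Z)$, the quotient $Z/P$ has node set $P$ and an arc $(S,T)$, $S\neq T$, labelled $r$ whenever some $r$-labelled arc goes from $S$ to $T$; the $Z[S]$, $S\in P$, are the factors. A directed path with $m$ nodes has nodes $u_1,\dots,u_m$ and arcs exactly $(u_i,u_{i+1})$; its length is $m-1$. Module decomposition: for $Z$ with at least two nodes, exactly one of the following holds: (1) $Z$ has a unique maximal partition; (2) there is a unique modular partition $P$ such that $Z/P$ is a directed path with at least three nodes whose arcs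 all carry the same label and whose length is maximal among modular partitions $R$ with $Z/R$ a path. Let $P$ be the partition of (1) or (2) accordingly. The module decomposition of $Z$ consists of the quotient $Z/P$ together with (recursively) the module decompositions of all factors $Z[S]$, $S\in P$, with at least two nodes; a one-node structure has empty decomposition. The quotient graphs in the module decomposition are all the quotients produced in this recursion. *)

From mathcomp Require Import all_boot.
Set Implicit Arguments. Unset Strict Implicit. Unset Printing Implicit Defensive.

(* Arcs are labelled triples (u, v, r); several arcs with different
   labels between the same pair are allowed (needed for quotients). Only arcs
   between nodes of [gnodes] are ever considered. *)
Record lgraph (U : finType) (R : Type) := LGraph {
  gnodes : {set U};
  garc : U -> U -> R -> Prop }.

Section LGraphDefs.
Variables (U : finType) (R : Type).
Implicit Types (G : lgraph U R) (X Y : {set U}) (P : {set {set U}}).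

Definition edge G (u v : U) : Prop := exists r, garc G u v r.

Definition is_source G X (x : U) : Prop :=
  x \in X /\ forall y, y \in X -> ~ edge G y x.

Definition is_module G X : Prop :=
  X \subset gnodes G /\
  exists s, (is_source G X s /\ forall x, is_source G X x -> x = s) /\
    forall v, v \in gnodes G -> v \notin X ->
      (forall x, x \in X -> edge G v x -> x = s) /\
      (forall x r, x \in X -> garc G x v r ->
         forall x', x' \in X ->
           (exists w, w \in gnodes G /\ garc G x' w r) /\
           (forall w, w \in gnodes G -> garc G x' w r -> w = v \/ w \in X)).

Definition trivial_module G X : Prop :=
  X = gnodes G \/ exists v, X = [set v].

Definition prime_graph G : Prop := forall X, is_module G X -> trivial_module G X.

Definition maximal_module G X : Prop :=
  [/\ is_module G X, X \proper gnodes G &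
      forall Y, is_module G Y -> X \subset Y -> Y = X \/ Y = gnodes G].

Definition modular_partition G P : Prop :=
  partition P (gnodes G) /\ forall S, S \in P -> is_module G S.

Definition maximal_partition G P : Prop :=
  partition P (gnodes G) /\ forall S, S \in P -> maximal_module G S.

Definition sub G X : lgraph U R := LGraph X (garc G).

Definition quotient G P : lgraph {set U} R :=
  LGraph P (fun S T r => S <> T /\
                         exists u v, [/\ u \in S, v \in T & garc G u v r]).

Definition dipath_seq G (s : seq U) : Prop :=
  [/\ uniq s, gnodes G =i s &
      forall a b, a \in gnodes G -> b \in gnodes G ->
        (edge G a b <-> exists s1 s2, s = s1 ++ a :: b :: s2)].

Definition is_dipath G : Prop := exists s, dipath_seq G s.

Definition path3_same G : Prop :=
  (exists s, dipath_seq G s /\ 3 <= size s) /\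
  exists r, forall a b r', a \in gnodes G -> b \in gnodes G ->
                           garc G a b r' -> r' = r.

End LGraphDefs.

Section Decomp.
Variables (U : finType) (R : Type).
Implicit Types (G : lgraph U R) (X Y : {set U}) (P : {set {set U}}).

(* the partition of case (2): quotient a same-label path with >= 3 nodes,
   of maximal length (= #|P| - 1) among modular partitions with path quotient *)
Definition path_partition G P : Prop :=
  [/\ modular_partition G P, path3_same (quotient G P) &
      forall Q, modular_partition G Q -> is_dipath (quotient G Q) ->
                #|Q| <= #|P| ].

Definition unique_maximal_partition G P : Prop :=
  maximal_partition G P /\ forall Q, maximal_partition G Q -> Q = P.

Definition decomp_partition G P : Prop :=
  2 <= #|gnodes G| /\
  (unique_maximal_partition G P \/
   (~ (exists Q, unique_maximal_partition G Q) /\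
    path_partition G P /\ forall Q, path_partition G Q -> Q = P)).

(* node sets X such that G[X] is decomposed in the module decomposition of G *)
Inductive in_decomp G : {set U} -> Prop :=
  | in_decomp_root : in_decomp G (gnodes G)
  | in_decomp_sub X P S : in_decomp G X -> decomp_partition (sub G X) P ->
      S \in P -> 2 <= #|S| -> in_decomp G S.

End Decomp.

(* Decision structure on node type T, arcs [adj], arc labels [lab]
   (meaningful on arcs only), node labelling by actions irrelevant here. *)
Definition is_decision_structure (T : finType) (R : Type)
    (adj : rel T) (lab : T -> T -> R) : Prop :=
  [/\ (forall x y, adj x y -> ~~ connect adj y x),
      (exists! s, forall y, ~~ adj y s)
    & (forall u v w, adj u v -> adj u w -> lab u v = lab u w -> v = w)].

Definition dgraph (T : finType) (R : Type) (adj : rel T) (lab : T -> T -> R)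
  : lgraph T R := LGraph [set: T] (fun u v r => adj u v /\ lab u v = r).

From mathcomp Require Import all_boot.

(* Case (2) is immediate, so the content is case (1): the
   quotient of G by a partition into maximal modules is prime.

   The key fact, valid for ANY modular partition P, is that the union
   [cover M] of the blocks of a module M of G/P is a module of G; its source
   is the source s0 of the source block S0 of M.  If P consists of maximal
   modules, then [cover M] is a module containing the maximal module S0, so
   it is S0 itself (whence M = {S0}) or all of G (whence M = P); i.e. every
   module of G/P is trivial. *)

Set Implicit Arguments.
Unset Strict Implicit.
Unset Printing Implicit Defensive.

Section Partitions.
Variables (U : finType) (P : {set {set U}}) (D : {set U}).
Hypothesis Ppart : partition P D.

Lemma block_eq (B C : {set U}) (x : U) :
  B \in P -> C \in P -> x \in B -> x \in C -> B = C.
Proof.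
case/and3P: Ppart => _ tI _ BP CP xB xC.
by rewrite -(def_pblock tI BP xB) (def_pblock tI CP xC).
Qed.

Lemma block_notin (B C : {set U}) (x : U) :
  B \in P -> C \in P -> B <> C -> x \in B -> x \notin C.
Proof. by move=> BP CP BC xB; apply/negP => xC; apply: BC; exact: block_eq xC. Qed.

Lemma block_exists (x : U) : x \in D -> exists2 B, B \in P & x \in B.
Proof.
case/and3P: Ppart => /eqP covP _ _; rewrite -covP => xD.
by exists (pblock P x); [exact: pblock_mem | rewrite mem_pblock].
Qed.

Lemma block_sub (B : {set U}) : B \in P -> B \subset D.
Proof. by case/and3P: Ppart => /eqP <- _ _ BP; exact: bigcup_sup. Qed.

Lemma block_nonempty (B : {set U}) : B \in P -> exists x, x \in B.
Proof.
case/and3P: Ppart => _ _ P0 BP; apply/set0Pn.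
by apply: contraNneq P0 => <-.
Qed.

Lemma cover_within_block (M : {set {set U}}) (S : {set U}) :
  M \subset P -> S \in M -> cover M \subset S -> M = [set S].
Proof.
move=> MP SM covS; apply/setP => B; rewrite inE.
apply/idP/eqP => [BM | -> //].
have [x xB] := block_nonempty (subsetP MP B BM).
have xS : x \in S by apply: (subsetP covS); apply/bigcupP; exists B.
exact: block_eq (subsetP MP B BM) (subsetP MP S SM) xB xS.
Qed.

Lemma cover_full (M : {set {set U}}) :
  M \subset P -> D \subset cover M -> M = P.
Proof.
move=> MP DM; apply/eqP; rewrite eqEsubset MP; apply/subsetP => C CP.
have [x xC] := block_nonempty CP.
have /bigcupP [B BM xB] := subsetP DM x (subsetP (block_sub CP) x xC).
by rewrite -(block_eq (subsetP MP B BM) CP xB xC).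
Qed.

End Partitions.

Section Modules.
Variables (U : finType) (R : Type) (G : lgraph U R).

Definition module_at (X : {set U}) (s : U) : Prop :=
  X \subset gnodes G /\
  (is_source G X s /\ forall x, is_source G X x -> x = s) /\
  forall v, v \in gnodes G -> v \notin X ->
    (forall x, x \in X -> edge G v x -> x = s) /\
    (forall x r, x \in X -> garc G x v r ->
       forall x', x' \in X ->
         (exists w, w \in gnodes G /\ garc G x' w r) /\
         (forall w, w \in gnodes G -> garc G x' w r -> w = v \/ w \in X)).

Lemma is_module_at (X : {set U}) : is_module G X <-> exists s, module_at X s.
Proof. by split=> [[Xsub [s hs]] | [s [Xsub hs]]]; [exists s | split; last exists s]. Qed.

Lemma block_arc (P : {set {set U}}) (B C : {set U}) (x y : U) (r : R) :
  x \in B -> y \in C -> y \notin B -> garc G x y r -> garc (quotient G P) B C r.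
Proof. by move=> xB yC ynB hxy; split; [move=> BC; rewrite BC yC in ynB | exists x, y]. Qed.

End Modules.

Section CoverModule.
Variables (U : finType) (R : Type) (G : lgraph U R).
Variables (P M : {set {set U}}) (S0 : {set U}) (s0 : U).
Hypothesis Ppart : partition P (gnodes G).
Hypothesis Pmod : forall B, B \in P -> is_module G B.
Hypothesis HM : module_at (quotient G P) M S0.
Hypothesis HS0 : module_at G S0 s0.

Let inP (B : {set U}) : B \in M -> B \in P.
Proof. by case: HM => MP _; exact: (subsetP MP). Qed.

Let inG (B : {set U}) (x : U) : B \in M -> x \in B -> x \in gnodes G.
Proof. by move=> BM; apply: (subsetP (block_sub Ppart (inP BM))). Qed.

Let in_cover (B : {set U}) (x : U) : B \in M -> x \in B -> x \in cover M.
Proof. by move=> BM xB; apply/bigcupP; exists B. Qed.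

Let block_module (B : {set U}) : B \in P -> exists sB, module_at G B sB.
Proof. by move=> BP; apply/is_module_at; exact: Pmod. Qed.

Let inside_notin_outside (B C : {set U}) (x : U) :
  B \in M -> C \in P -> C \notin M -> x \in B -> x \notin C.
Proof.
move=> BM CP CnM; apply: (block_notin Ppart (inP BM) CP) => BC.
by rewrite -BC BM in CnM.
Qed.

Let outside_notin_inside (B C : {set U}) (y : U) :
  B \in M -> C \in P -> C \notin M -> y \in C -> y \notin B.
Proof.
move=> BM CP CnM; apply: (block_notin Ppart CP (inP BM)) => CB.
by rewrite CB BM in CnM.
Qed.

Let outside_block (v : U) :
  v \in gnodes G -> v \notin cover M ->
  exists C, [/\ C \in P, C \notin M & v \in C].
Proof.
move=> vG vnY; have [C CP vC] := block_exists Ppart vG.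
by exists C; split=> //; apply: contra vnY => CM; exact: in_cover CM vC.
Qed.

Lemma cover_source : is_source G (cover M) s0.
Proof.
have [_ [[[s0S0 s0src] _] _]] := HS0.
have [_ [[[S0M S0src] _] _]] := HM.
split=> [|y /bigcupP [C CM yC] [r hy]]; first exact: in_cover S0M s0S0.
have [CS0 | /eqP CS0] := eqVneq C S0; first by subst C; apply: (s0src y yC); exists r.
have s0nC : s0 \notin C.
  exact: (block_notin Ppart (inP S0M) (inP CM) (not_eq_sym CS0) s0S0).
by apply: (S0src C CM); exists r; exact: (block_arc P yC s0S0 s0nC hy).
Qed.

(* any source of [cover M] is the source of its block, which is a source of M *)
Lemma cover_source_unique (x : U) : is_source G (cover M) x -> x = s0.
Proof.
move=> [/bigcupP [B BM xB] xsrc].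
have [_ [[_ S0uniq] _]] := HM.
have [_ [[_ s0uniq] _]] := HS0.
have [sB [_ [[_ sBuniq] sBentry]]] := block_module (inP BM).
have xsrcB : is_source G B x by split=> // y yB; apply: xsrc; exact: in_cover BM yB.
have xsB : x = sB := sBuniq x xsrcB.
(* B has no incoming quotient arc from M: such an arc would enter B at x *)
have BS0 : B = S0.
  apply: S0uniq; split=> // C CM [r [CB [u [v [uC vB huv]]]]].
  have unB : u \notin B by exact: (block_notin Ppart (inP CM) (inP BM) CB uC).
  have vx : v = x by rewrite xsB; apply: ((sBentry u (inG CM uC) unB).1 v vB); exists r.
  by apply: (xsrc u (in_cover CM uC)); exists r; rewrite -vx.
subst B; apply: s0uniq; split=> // y yS0; exact: xsrc (in_cover BM yS0).
Qed.

(* arcs entering [cover M] enter the source block S0, hence end at s0 *)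
Lemma cover_entry (v x : U) :
  v \in gnodes G -> v \notin cover M -> x \in cover M -> edge G v x -> x = s0.
Proof.
move=> vG vnY /bigcupP [B BM xB] [r hvx].
have [C [CP CnM vC]] := outside_block vG vnY.
have [_ [_ Mout]] := HM.
have BS0 : B = S0.
  apply: ((Mout C CP CnM).1 B BM); exists r.
  exact: (block_arc P vC xB (inside_notin_outside BM CP CnM xB) hvx).
have [_ [_ S0out]] := HS0; subst B.
by apply: ((S0out v vG (contra (in_cover BM) vnY)).1 x xB); exists r.
Qed.

Lemma cover_exit (v x x' : U) (r : R) :
  v \in gnodes G -> v \notin cover M -> x \in cover M -> garc G x v r ->
  x' \in cover M ->
  (exists w, w \in gnodes G /\ garc G x' w r) /\
  (forall w, w \in gnodes G -> garc G x' w r -> w = v \/ w \in cover M).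
Proof.
move=> vG vnY /bigcupP [B BM xB] hxv /bigcupP [B' B'M x'B'].
have [C [CP CnM vC]] := outside_block vG vnY.
have [_ [_ Mout]] := HM.
have BC : garc (quotient G P) B C r.
  exact: (block_arc P xB vC (outside_notin_inside BM CP CnM vC) hxv).
(* in the quotient every block of M leaves by an r-arc, towards C or into M *)
have [B'leaves B'exits] := (Mout C CP CnM).2 B r BM BC B' B'M.
have [sB' [_ [_ B'out]]] := block_module (inP B'M).
split.
  (* B' has an r-arc u -> w leaving it; B' being a module, x' has one too *)
  have [W [WP [WB' [u [w [uB' wW huw]]]]]] := B'leaves.
  have wnB' : w \notin B'.
    exact: (block_notin Ppart WP (inP B'M) (not_eq_sym WB') wW).
  exact: ((B'out w (subsetP (block_sub Ppart WP) w wW) wnB').2 u r uB' huw x' x'B').1.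
move=> w wG hx'w; have [wY | wnY] := boolP (w \in cover M); [by right | left].
have [D [DP DnM wD]] := outside_block wG wnY.
have B'D : garc (quotient G P) B' D r.
  exact: (block_arc P x'B' wD (outside_notin_inside B'M DP DnM wD) hx'w).
have [DC | DM] := B'exits D DP B'D; last by rewrite DM in DnM.
(* both v and w are entry points of the module C, hence its source *)
subst D; have [sC [_ [_ Cout]]] := block_module CP.
have xnC := inside_notin_outside BM CP CnM xB.
have x'nC := inside_notin_outside B'M CP CnM x'B'.
have -> : v = sC by apply: ((Cout x (inG BM xB) xnC).1 v vC); exists r.
by apply: ((Cout x' (inG B'M x'B') x'nC).1 w wD); exists r.
Qed.

Lemma cover_module : module_at G (cover M) s0.
Proof.
split; first by apply/subsetP => y /bigcupP [B BM yB]; exact: inG BM yB.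
split; first by split; [exact: cover_source | exact: cover_source_unique].
move=> v vG vnY; split=> [x | x r xY hxv x' x'Y]; first exact: cover_entry.
exact: (cover_exit vG vnY xY hxv x'Y).
Qed.

End CoverModule.

(* A module M of G/P with source block S0 yields the module
   [cover M] of G containing S0; by maximality of S0 it is S0 or all of G. *)
Lemma maximal_partition_quotient_prime (U : finType) (R : Type)
    (G : lgraph U R) (P : {set {set U}}) :
  maximal_partition G P -> prime_graph (quotient G P).
Proof.
move=> [Ppart Pmax] M /is_module_at [S0 HM].
have Pmod B : B \in P -> is_module G B by case/Pmax.
have [MP [[[S0M _] _] _]] := HM.
have [S0mod _ S0max] := Pmax S0 (subsetP MP S0 S0M).
have [s0 HS0] := (is_module_at G S0).1 S0mod.
have Ymod : is_module G (cover M).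
  by apply/is_module_at; exists s0; exact: (cover_module Ppart Pmod HM HS0).
have [YS0 | YG] := S0max _ Ymod (bigcup_sup S0 S0M).
  by right; exists S0; apply: (cover_within_block Ppart MP S0M); rewrite YS0.
by left; apply: (cover_full Ppart MP); rewrite YG.
Qed.

Unset Implicit Arguments.

Theorem mainTheorem7 (T : finType) (R Act : Type) (adj : rel T)
    (lab : T -> T -> R) (act : T -> Act)
    (hZ : is_decision_structure adj lab) :
  forall (X : {set T}) (P : {set {set T}}),
    in_decomp (dgraph adj lab) X ->
    decomp_partition (sub (dgraph adj lab) X) P ->
    prime_graph (quotient (sub (dgraph adj lab) X) P) \/
    path3_same (quotient (sub (dgraph adj lab) X) P).
Proof.
move=> X P _ [_ [[Pmax _] | [_ [[_ Ppath _] _]]]].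
  by left; exact: maximal_partition_quotient_prime.
by right; exact: Ppath.
Qed.
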